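(* Let $V$ be a nonempty set, $E\subset V\times V$, $W\subset V$, and let $B,C\subset V$ satisfy $B\cap C=\emptyset$, $B\cap W=\emptyset$, $C\cap W=\emptyset$. Let $b\in B$ and $c\in C$ be such that $b\,A_W\,c$ and $\operatorname{cl}_W(\{b\})\cap\operatorname{cl}_W(\{c\})=\emptyset$. Then there exist $w_b,w_c\in W$ with $w_b\,C_W\,w_c$ such that $\operatorname{cl}_W(\{b\})\cap\operatorname{cl}_W(\{w_b\})\neq\emptyset$ and $\operatorname{cl}_W(\{c\})\cap\operatorname{cl}_W(\{w_c\})\neq\emptyset$.
   Context: Relations on $V$: $x\,R\,y$ means $(x,y)\in R$; composition $RR'$: $x(RR')y$ iff there is $z$ with $xRz$ and $zR'y$; $R^{-1}$ is the converse; $R^0=\Delta$, $R^{n+1}=RR^n$, $R^+=\bigcup_{k\ge1}R^k$, $R^*=\bigcup_{k\ge0}R^k$. For $S\subset V$, $\Delta_S=\{(x,x):x\in S\}$, $\Delta=\Delta_V$. For any relation $F$, $\mathcal T_F=\{O\subset V: OF\subset O\}$ is a topology on $V$, where $OF=\{y:\exists o\in O,\ oFy\}$. With $W^c=V\setminus W$: $E_W=\Delta_{W^c}E$; $B_W=E(E_W)^*$; $B_W^-=(B_W)^{-1}=(E_W^{-1})^*E^{-1}$; $K_W=B_W^-\Delta_{W^c}B_W$; $C_W=(\Delta_WK_W\Delta_W)^+\cup\Delta_W$ (a partial equivalence relation); $A_W=\Delta\cup B_W\cup B_W^-\cup K_W\cup(B_W\cup K_W)\,C_W\,(B_W^-\cup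 K_W^{-1})$. For $S\subset V$, $\operatorname{cl}_W(S)$ is the topological closure of $S$ in the topology $\mathcal T_{E_W}$. *)

From Stdlib Require Import Arith.

Definition relation (V : Type) := V -> V -> Prop.
Definition vset (V : Type) := V -> Prop.

Section Rel.
Context {V : Type}.

Definition comp (R R' : relation V) : relation V :=
  fun x y => exists z, R x z /\ R' z y.
Definition conv (R : relation V) : relation V := fun x y => R y x.
Definition runion (R R' : relation V) : relation V := fun x y => R x y \/ R' x y.
Definition diag (S : vset V) : relation V := fun x y => x = y /\ S x.
Definition Delta : relation V := fun x y => x = y.
Definition compl (S : vset V) : vset V := fun x => ~ S x.

Fixpoint rpow (R : relation V) (n : nat) : relation V :=
  match n with
  | O => Delta
  | S n' => comp R (rpow R n')
  end.
Definition rplus (R : relation V) : relation V := fun x y => exists k, 1 <= k /\ rpow R k x y.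
Definition rstar (R : relation V) : relation V := fun x y => exists k, rpow R k x y.

Definition img (O : vset V) (F : relation V) : vset V := fun y => exists o, O o /\ F o y.
Definition openF (F : relation V) (O : vset V) : Prop := forall y, img O F y -> O y.
Definition closedF (F : relation V) (Cl : vset V) : Prop := openF F (compl Cl).
Definition closureF (F : relation V) (S : vset V) : vset V :=
  fun x => forall Cl, closedF F Cl -> (forall s, S s -> Cl s) -> Cl x.

Variables (E : relation V) (W : vset V).

Definition E_W : relation V := comp (diag (compl W)) E.
Definition B_W : relation V := comp E (rstar E_W).
Definition Bm_W : relation V := conv B_W.
Definition K_W : relation V := comp Bm_W (comp (diag (compl W)) B_W).
Definition C_W : relation V :=
  runion (rplus (comp (diag W) (comp K_W (diag W)))) (diag W).
Definition A_W : relation V :=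
  runion Delta (runion B_W (runion Bm_W (runion K_W
    (comp (runion B_W K_W) (comp C_W (runion Bm_W (conv K_W))))))).
Definition cl_W (S : vset V) : vset V := closureF E_W S.

End Rel.

Definition singleton {V : Type} (a : V) : vset V := fun x => x = a.

(* In the topology T_F a closed set is closed under F-predecessors, so the closure of {a}
   contains every vertex from which a is reached by an F-path.  A B_W-step out of a vertex
   outside W is an E_W-path, and the two ends of a K_W-step have a common E_W-ancestor;
   hence every branch of A_W except the one through C_W makes the closures of b and c
   meet.  The remaining branch b (B_W ∪ K_W) w_b C_W w_c (B_W ∪ K_W)^-1 c gives the
   witnesses, and they lie in W because C_W only relates vertices of W. *)

From Stdlib Require Import Classical.

Section Closure.
Context {V : Type} (F : relation V).

Definition closures_meet (x y : V) : Prop :=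
  exists z, closureF F (singleton x) z /\ closureF F (singleton y) z.

Lemma closedF_pred (Cl : vset V) x y : closedF F Cl -> F x y -> Cl y -> Cl x.
Proof.
  intros HCl Hxy Hy. apply NNPP. intros Hx.
  apply (HCl y); [exists x; split; assumption | exact Hy].
Qed.

Lemma rstar_refl x : rstar F x x.
Proof. exists 0. reflexivity. Qed.

Lemma rstar_cons x y z : F x y -> rstar F y z -> rstar F x z.
Proof. intros Hxy [k Hk]. exists (S k), y. split; assumption. Qed.

Lemma rstar_closureF x a : rstar F x a -> closureF F (singleton a) x.
Proof.
  intros [k Hk]. revert x Hk.
  induction k as [|k IH]; intros x Hk Cl HCl Ha.
  - simpl in Hk. unfold Delta in Hk. subst. apply Ha. reflexivity.
  - destruct Hk as [u [Hxu Hu]].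
    apply (closedF_pred Cl x u HCl Hxu). exact (IH u Hu Cl HCl Ha).
Qed.

Lemma closures_meet_sym x y : closures_meet x y -> closures_meet y x.
Proof. intros [z [Hx Hy]]. exists z. split; assumption. Qed.

Lemma closures_meet_of_rstar z x y :
  rstar F z x -> rstar F z y -> closures_meet x y.
Proof.
  intros Hx Hy. exists z. split; apply rstar_closureF; assumption.
Qed.

End Closure.

Lemma rpow_diag_sandwich {V : Type} (S : vset V) (R : relation V) k x y :
  rpow (comp (diag S) (comp R (diag S))) (Datatypes.S k) x y -> S x /\ S y.
Proof.
  revert x. induction k as [|k IH]; intros x Hk.
  - destruct Hk as [u [[x' [[<- Hx] [t [_ [<- Hu]]]]] Huy]].
    simpl in Huy. unfold Delta in Huy. subst. split; assumption.
  - destruct Hk as [u [[x' [[<- Hx] _]] Huy]].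
    split; [assumption | exact (proj2 (IH u Huy))].
Qed.

Section Bridges.
Context {V : Type} (E : relation V) (W : vset V).

Lemma B_W_rstar x y : ~ W x -> B_W E W x y -> rstar (E_W E W) x y.
Proof.
  intros Hx [u [Hxu Hu]]. apply rstar_cons with u; [| exact Hu].
  exists x. split; [split; [reflexivity | exact Hx] | exact Hxu].
Qed.

Lemma K_W_common_ancestor x y :
  K_W E W x y -> exists z, rstar (E_W E W) z x /\ rstar (E_W E W) z y.
Proof.
  intros [z [Hzx [z' [[<- Hz] Hzy]]]].
  exists z. split; apply B_W_rstar; assumption.
Qed.

Lemma closures_meet_of_B_W_or_K_W x y :
  ~ W x -> runion (B_W E W) (K_W E W) x y -> closures_meet (E_W E W) x y.
Proof.
  intros Hx [Hxy | Hxy].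
  - apply closures_meet_of_rstar with x; [apply rstar_refl | exact (B_W_rstar x y Hx Hxy)].
  - destruct (K_W_common_ancestor x y Hxy) as [z [Hzx Hzy]].
    exact (closures_meet_of_rstar _ z x y Hzx Hzy).
Qed.

Lemma C_W_in_W x y : C_W E W x y -> W x /\ W y.
Proof.
  intros [[[|k] [Hk Hxy]] | [<- Hx]].
  - inversion Hk.
  - exact (rpow_diag_sandwich W _ k x y Hxy).
  - split; assumption.
Qed.

End Bridges.

Theorem lemma1 (V : Type) (HV : inhabited V) (E : relation V) (W : vset V)
  (Bs Cs : vset V)
  (hBC : forall x, Bs x -> Cs x -> False)
  (hBW : forall x, Bs x -> W x -> False)
  (hCW : forall x, Cs x -> W x -> False)
  (b c : V) (hb : Bs b) (hc : Cs c)
  (hA : A_W E W b c)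
  (hdisj : forall x, cl_W E W (singleton b) x -> cl_W E W (singleton c) x -> False) :
  exists wb wc, W wb /\ W wc /\ C_W E W wb wc /\
    (exists x, cl_W E W (singleton b) x /\ cl_W E W (singleton wb) x) /\
    (exists x, cl_W E W (singleton c) x /\ cl_W E W (singleton wc) x).
Proof.
  assert (b_out : ~ W b) by (intros Hb; exact (hBW b hb Hb)).
  assert (c_out : ~ W c) by (intros Hc; exact (hCW c hc Hc)).
  assert (not_meet : ~ closures_meet (E_W E W) b c)
    by (intros [x [Hbx Hcx]]; exact (hdisj x Hbx Hcx)).
  destruct hA as [Heq | [HB | [HBm | [HK | [wb [Hbwb [wc [Hwbwc Hwcc]]]]]]]].
  - unfold Delta in Heq. subst c. exfalso. exact (hBC b hb hc).
  - exfalso. apply not_meet.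
    exact (closures_meet_of_B_W_or_K_W E W b c b_out (or_introl HB)).
  - exfalso. apply not_meet, closures_meet_sym.
    exact (closures_meet_of_B_W_or_K_W E W c b c_out (or_introl HBm)).
  - exfalso. apply not_meet.
    exact (closures_meet_of_B_W_or_K_W E W b c b_out (or_intror HK)).
  - destruct (C_W_in_W E W wb wc Hwbwc) as [Wwb Wwc].
    exists wb, wc. split; [exact Wwb |]. split; [exact Wwc |]. split; [exact Hwbwc |].
    split.
    + exact (closures_meet_of_B_W_or_K_W E W b wb b_out Hbwb).
    + exact (closures_meet_of_B_W_or_K_W E W c wc c_out Hwcc).
Qed.
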